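(* Let $M\ge1$, let $(\tau,R)$ be an $M$-layer medium, let $\mathsf{p}\in\mathsf{S}_M$, and set $(k,b)=(\kappa(\mathsf{p}),\beta(\mathsf{p}))$. Then \[ w(\mathsf{p})=(-R)^{\tilde{k}-b}R^{k-b}T^{2b}. \]
   Context: Fix depths $z_{-1}<z_0<\cdots<z_M$ and reals $R=(R_0,\ldots,R_M)$ with $-1<R_n<1$ (the travel times $\tau$ play no role); $T_n=\sqrt{1-R_n^2}$, $T=(T_0,\ldots,T_M)$. A (reflection) scattering sequence is a finite sequence $\mathsf{p}=(\mathsf{p}_0,\ldots,\mathsf{p}_L)$ with $L\geq 2$, $\mathsf{p}_0=\mathsf{p}_L=z_{-1}$, $\mathsf{p}_i\in\{z_0,\ldots,z_M\}$ for $1\le i\le L-1$, and for every $0\le i\le L-1$ there is $-1\le j\le M-1$ with $\{\mathsf{p}_i,\mathsf{p}_{i+1}\}=\{z_j,z_{j+1}\}$; $\mathsf{S}_M$ is the set of these. The weight is $w(\mathsf{p})=\prod_{i=1}^{L-1}w_i$ where, if $\mathsf{p}_i=z_j$: $w_i=R_j$ if $\mathsf{p}_{i-1}=\mathsf{p}_{i+1}=z_{j-1}$; $w_i=-R_j$ if $\mathsf{p}_{i-1}=\mathsf{p}_{i+1}=z_{j+1}$; $w_i=T_j$ otherwise. For $0\le n\le M$, $k_n$ is the number of maximal runs of consecutive indices $i$ with $\mathsf{p}_i\in\{z_n,\ldots,z_M\}$, and $b_n$ the number of those runs of length at least 2; $\kappa(\mathsf{p})=(k_0,\ldots,k_M)$,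 $\beta(\mathsf{p})=(b_0,\ldots,b_M)$. Notation: $\tilde{k}=(k_1,\ldots,k_M,0)$; vector arithmetic entrywise; $s^d=\prod_{n=0}^M s_n^{d_n}$ with $0^0=1$. *)

From mathcomp Require Import all_boot all_order all_algebra.
Set Implicit Arguments. Unset Strict Implicit. Unset Printing Implicit Defensive.
Import Order.TTheory GRing.Theory Num.Theory.
Local Open Scope ring_scope.

(* Encoding of depths: the depth z_j (-1 <= j <= M) is encoded by the
   natural number j+1.  So 0 encodes z_{-1} and n.+1 encodes z_n.
   Since z_{-1} < z_0 < ... < z_M, this encoding is a bijection and
   {p_i, p_{i+1}} = {z_j, z_{j+1}} iff the codes are adjacent integers. *)

Definition scattering_seq (M : nat) (p : seq nat) : Prop :=
  [/\ (2 < size p)%N,                          (* L >= 2, L = size p - 1 *)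
      nth 0%N p 0 = 0%N,
      nth 0%N p (size p).-1 = 0%N,
      (forall i, (0 < i < (size p).-1)%N ->
         (1 <= nth 0%N p i <= M.+1)%N)
    & (forall i, (i < (size p).-1)%N ->
         (nth 0%N p i.+1 == (nth 0%N p i).+1) ||
         (nth 0%N p i == (nth 0%N p i.+1).+1))].

Section Weights.
Variable F : rcfType.

Definition Tcoef (R : nat -> F) (j : nat) : F := Num.sqrt (1 - R j ^+ 2).

Definition wloc (R : nat -> F) (p : seq nat) (i : nat) : F :=
  let x := nth 0%N p i in
  let y := nth 0%N p i.-1 in
  let z := nth 0%N p i.+1 in
  let j := x.-1 in
  if (y == x.-1) && (z == x.-1) then R j
  else if (y == x.+1) && (z == x.+1) then - R j
  else Tcoef R j.

Definition weight (R : nat -> F) (p : seq nat) : F :=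
  \prod_(1 <= i < (size p).-1) wloc R p i.

End Weights.

Definition in_lev (n : nat) (p : seq nat) (i : nat) : bool :=
  (n.+1 <= nth 0%N p i)%N.

Definition is_run (n : nat) (p : seq nat) (a e : nat) : bool :=
  let L := (size p).-1 in
  [&& (a <= e)%N, (e <= L)%N,
      [forall i : 'I_L.+1, ((a <= i <= e)%N ==> in_lev n p i)],
      (a == 0%N) || ~~ in_lev n p a.-1
    & (e == L) || ~~ in_lev n p e.+1].

Definition kappa (n : nat) (p : seq nat) : nat :=
  \sum_(a < (size p).-1.+1) \sum_(e < (size p).-1.+1) is_run n p a e.

Definition beta (n : nat) (p : seq nat) : nat :=
  \sum_(a < (size p).-1.+1) \sum_(e < (size p).-1.+1)
     (is_run n p a e && (a < e)%N).

Definition kappa_tilde (M n : nat) (p : seq nat) : nat :=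
  if (n < M)%N then kappa n.+1 p else 0%N.

From mathcomp Require Import all_boot all_order all_algebra.
From mathcomp Require Import zify.
Import Order.TTheory GRing.Theory Num.Theory.

(* Group the factors of w(p) by level: a visit to z_n contributes R_n when both
   neighbours are z_(n-1), -R_n when both are z_(n+1), and T_n otherwise.  A
   maximal run of p at depth >= z_n starts with a step z_(n-1) -> z_n and either
   returns at once (a factor R_n) or goes on to z_(n+1) (one of the b_n downward
   transmissions), so k - b counts the factors R_n.  Every step z_n -> z_(n+1)
   starts a run at level n+1 and comes from a downward transmission or a
   reflection -R_n, so k~ - b counts the factors -R_n.  A closed walk crosses
   between z_n and z_(n+1) equally often in both directions, so there are also
   b_n upward transmissions, giving T_n^(2 b_n). *)

Set Implicit Arguments.
Unset Strict Implicit.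
Unset Printing Implicit Defensive.

Section Runs.
Variables (n : nat) (p : seq nat).
Local Notation L := (size p).-1.

Definition run_start (a : nat) : bool :=
  in_lev n p a && ((a == 0) || ~~ in_lev n p a.-1).

Lemma in_lev_past_end i : L < i -> in_lev n p i = false.
Proof. by move=> ?; rewrite /in_lev nth_default //; lia. Qed.

Lemma is_runP a e :
  reflect [/\ a <= e <= L, (forall i, a <= i <= e -> in_lev n p i),
              (a == 0) || ~~ in_lev n p a.-1 & (e == L) || ~~ in_lev n p e.+1]
          (is_run n p a e).
Proof.
apply: (iffP and5P) => [[ae eL /forallP lev a0 eL1]|[/andP[ae eL] lev a0 eL1]].
  split; rewrite ?ae ?eL // => i ai.
  have iL : i < L.+1 by lia.
  by have /implyP -> := lev (Ordinal iL).
by split=> //; apply/forallP => i; apply/implyP; exact: lev.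
Qed.

Lemma run_start_is_run a e : is_run n p a e -> run_start a.
Proof. by case/is_runP => aeL lev a0 _; rewrite /run_start a0 lev ?andbT; lia. Qed.

Lemma is_run_unique a e e' : is_run n p a e -> is_run n p a e' -> e = e'.
Proof.
wlog ee' : e e' / e <= e' => [sym r r'|].
  by case: (leqP e e') => ?; [|apply/esym]; apply: sym => //; exact: ltnW.
case/is_runP=> aeL _ _ eL1 /is_runP[ae'L lev' _ _].
case: ltngtP ee' => // lt _; case/orP: eL1 => [/eqP eL|]; first lia.
by rewrite lev' //; lia.
Qed.

(* The end of the run starting at [a] is the least [e >= a] at which the run
   cannot be continued. *)
Lemma run_start_exists_end a : run_start a -> exists e, is_run n p a e.
Proof.
case/andP=> leva a0.
have aL : a <= L by apply: contraTT leva; rewrite -ltnNge => /in_lev_past_end ->.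
pose stop e := (a <= e) && ((e == L) || ~~ in_lev n p e.+1).
have stopL : stop L by rewrite /stop aL eqxx.
have [e /andP[ae eL1] min_e] := ex_minnP (ex_intro stop L stopL).
exists e; apply/is_runP; split=> //.
  by rewrite ae min_e.
move=> i /andP[ai ie]; case: (ltngtP a i) ai => [ai _|//|<- //].
apply: contraTT ie => levi; rewrite -ltnNge.
have -> : i = i.-1.+1 by lia.
by rewrite ltnS min_e // /stop prednK ?levi ?orbT //; [lia|lia].
Qed.

Lemma sum_is_run a : \sum_(e < L.+1) is_run n p a e = run_start a.
Proof.
case st: (run_start a); last first.
  by rewrite big1 // => e _; case r: is_run => //; rewrite (run_start_is_run r) in st.
have [e0 r0] := run_start_exists_end st.
have e0L : e0 < L.+1 by case/is_runP: r0; lia.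
rewrite (bigD1 (Ordinal e0L)) //= r0 big1 // => e ne.
case r: is_run => //; case/eqP: ne; apply: val_inj; exact: is_run_unique r r0.
Qed.

Lemma is_run_long a e : is_run n p a e -> (a < e) = in_lev n p a.+1.
Proof.
case/is_runP=> aeL lev _ eL1; case: (ltnP a e) => [ae|ea].
  by rewrite lev //; lia.
have <- : e = a by lia.
by case/orP: eL1 => [/eqP ->|/negbTE //]; rewrite in_lev_past_end.
Qed.

Lemma kappa_run_starts : kappa n p = \sum_(a < L.+1) run_start a.
Proof. by apply: eq_bigr => a _; exact: sum_is_run. Qed.

Lemma beta_run_starts :
  beta n p = \sum_(a < L.+1) (run_start a && in_lev n p a.+1).
Proof.
apply: eq_bigr => a _; rewrite -mulnb -sum_is_run big_distrl /=.
by apply: eq_bigr => e _; rewrite mulnb; case r: is_run; rewrite //= (is_run_long r).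
Qed.

End Runs.

Lemma big_ord_drop_first L (f : nat -> nat) :
  f 0 = 0 -> \sum_(j < L) f j = \sum_(1 <= i < L) f i.
Proof.
move=> f0; rewrite -(big_mkord xpredT); case: L => [|L]; first by rewrite !big_geq.
by rewrite big_ltn // f0.
Qed.

Lemma big_ord_shift_drop_last L (f : nat -> nat) :
  f L = 0 -> \sum_(j < L) f j.+1 = \sum_(1 <= i < L) f i.
Proof.
move=> fL; case: L fL => [|L] fL; first by rewrite big_ord0 big_geq.
by rewrite big_ord_recr /= fL addn0 big_add1 /= big_mkord.
Qed.

Definition crossings (p : seq nat) (x y : nat) : nat :=
  \sum_(j < (size p).-1) ((nth 0 p j == x) && (nth 0 p j.+1 == y)).

Definition triple_at (p : seq nat) (x y z i : nat) : bool :=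
  [&& nth 0 p i.-1 == x, nth 0 p i == y & nth 0 p i.+1 == z].

Definition triples (p : seq nat) (x y z : nat) : nat :=
  \sum_(1 <= i < (size p).-1) triple_at p x y z i.

Section ScatteringCounts.
Variables (M : nat) (p : seq nat).
Hypothesis hp : scattering_seq M p.
Local Notation L := (size p).-1.

Let first0 : nth 0 p 0 = 0. Proof. by case: hp. Qed.
Let last0 : nth 0 p L = 0. Proof. by case: hp. Qed.

Let step_adjacent j : j < L ->
  (nth 0 p j.+1 == (nth 0 p j).+1) || (nth 0 p j == (nth 0 p j.+1).+1).
Proof. by case: hp => _ _ _ _; apply. Qed.

Let interior_level i : 0 < i < L -> 0 < nth 0 p i <= M.+1.
Proof. by case: hp => _ _ _ lev _ /lev. Qed.

Lemma interior_adjacent i : 0 < i < L ->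
  [/\ (nth 0 p i == (nth 0 p i.-1).+1) || (nth 0 p i.-1 == (nth 0 p i).+1),
      (nth 0 p i.+1 == (nth 0 p i).+1) || (nth 0 p i == (nth 0 p i.+1).+1)
    & 0 < nth 0 p i].
Proof.
move=> iL; have /andP[-> _] := interior_level iL; split=> //.
  have iL1 : i.-1 < L by lia.
  by have := step_adjacent iL1; rewrite prednK //; lia.
by apply: step_adjacent; lia.
Qed.

Lemma run_start_crossing n a : 0 < a <= L ->
  run_start n p a = (nth 0 p a.-1 == n) && (nth 0 p a == n.+1).
Proof.
case: a => // a /andP[_ aL]; have := step_adjacent aL.
by rewrite /run_start /in_lev /=; lia.
Qed.

Lemma kappa_crossings n : kappa n p = crossings p n n.+1.
Proof.
rewrite kappa_run_starts big_ord_recl {1}/run_start /in_lev first0 /= add0n.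
by apply: eq_bigr => j _; rewrite /bump add1n run_start_crossing //= ltn_ord.
Qed.

Lemma kappa_tilde_crossings n : n <= M ->
  kappa_tilde M n p = crossings p n.+1 n.+2.
Proof.
rewrite /kappa_tilde; case: ltnP => [nM _|Mn nM]; first exact: kappa_crossings.
have -> : n = M by lia.
rewrite /crossings big1 // => j _; case: (ltnP j.+1 L) => jL.
  by have := interior_level (_ : 0 < j.+1 < L); rewrite jL; lia.
have -> : j.+1 = L by have := ltn_ord j; lia.
by rewrite last0 andbF.
Qed.

Lemma beta_triples n : beta n p = triples p n n.+1 n.+2.
Proof.
rewrite beta_run_starts big_ord_recl {1}/run_start /in_lev first0 /= add0n.
rewrite (eq_bigr (fun j : 'I_L => run_start n p j.+1 && in_lev n p j.+2 : nat)) //.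
rewrite (@big_ord_shift_drop_last _ (fun i => run_start n p i && in_lev n p i.+1));
  last by rewrite /run_start /in_lev last0.
apply: eq_big_nat => i iL; have [_ next _] := interior_adjacent iL.
by rewrite run_start_crossing /triple_at /in_lev; move: next; lia.
Qed.

(* Up- and down-crossings between two levels alternate along a walk that
   starts and ends at level 0. *)
Lemma crossings_closed c : crossings p c c.+1 = crossings p c.+1 c.
Proof.
have telescope m : m <= L ->
  \sum_(0 <= j < m) ((nth 0 p j == c) && (nth 0 p j.+1 == c.+1)) + (c < nth 0 p 0)
  = \sum_(0 <= j < m) ((nth 0 p j == c.+1) && (nth 0 p j.+1 == c)) + (c < nth 0 p m).
  elim: m => [|m IH] mL; first by rewrite !big_geq.
  have := step_adjacent mL; have := IH (ltnW mL).
  by rewrite !big_nat_recr //=; lia.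
by have := telescope L (leqnn L); rewrite first0 last0 !big_mkord !addn0.
Qed.

Lemma crossings_departures n z :
  crossings p n.+1 z = triples p n n.+1 z + triples p n.+2 n.+1 z.
Proof.
rewrite /crossings (@big_ord_drop_first _ (fun j => (nth 0 p j == n.+1) && (nth 0 p j.+1 == z)))
  ?first0 // /triples -big_split /=.
apply: eq_big_nat => i iL; have [prev _ _] := interior_adjacent iL.
by rewrite /triple_at; move: prev; lia.
Qed.

Lemma crossings_arrivals x n :
  crossings p x n.+1 = triples p x n.+1 n + triples p x n.+1 n.+2.
Proof.
rewrite /crossings (eq_bigr (fun j : 'I_L =>
  (nth 0 p j.+1.-1 == x) && (nth 0 p j.+1 == n.+1) : nat)) //.
rewrite (@big_ord_shift_drop_last _ (fun i => (nth 0 p i.-1 == x) && (nth 0 p i == n.+1)))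
  ?last0 ?andbF // /triples -big_split /=.
apply: eq_big_nat => i iL; have [_ next _] := interior_adjacent iL.
by rewrite /triple_at; move: next; lia.
Qed.
End ScatteringCounts.

Local Open Scope ring_scope.

Section WeightByLevels.
Variables (F : rcfType) (R : nat -> F) (M : nat) (p : seq nat).
Hypothesis hp : scattering_seq M p.

Definition level_weight (n a b c : nat) : F :=
  R n ^+ a * (- R n) ^+ b * Tcoef R n ^+ c.

Lemma wloc_levels i : (0 < i < (size p).-1)%N ->
  wloc R p i = \prod_(0 <= n < M.+1)
    level_weight n (triple_at p n n.+1 n i) (triple_at p n.+2 n.+1 n.+2 i)
                   (triple_at p n n.+1 n.+2 i + triple_at p n.+2 n.+1 n i).
Proof.
move=> iL; have [prev next pos] := interior_adjacent hp iL.
have [_ _ _ /(_ i iL) /andP[_ iM] _] := hp.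
set m := (nth 0%N p i).-1; have pim : nth 0%N p i = m.+1 by rewrite prednK.
have mM : (m < M.+1)%N by rewrite -ltnS -pim.
rewrite big_mkord (bigD1 (Ordinal mM)) //= big1 ?mulr1; last first.
  move=> n nm; rewrite /level_weight /triple_at pim eqSS.
  have -> : (m == n) = false by apply: contraNF nm => /eqP mn; apply/eqP/val_inj.
  by rewrite /= !andbF !expr0 !mulr1.
have [m2 m2'] : (m == m.+2) = false /\ (m.+2 == m) = false by split; lia.
rewrite /wloc /level_weight /triple_at pim /=.
have [->|->] : nth 0%N p i.-1 = m \/ nth 0%N p i.-1 = m.+2 by move: prev; lia.
all: have [->|->] : nth 0%N p i.+1 = m \/ nth 0%N p i.+1 = m.+2 by move: next; lia.
all: by rewrite !eqxx ?m2 ?m2' /= ?expr0 ?expr1 ?mul1r ?mulr1.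
Qed.

Lemma weight_levels : weight R p = \prod_(0 <= n < M.+1)
  level_weight n (triples p n n.+1 n) (triples p n.+2 n.+1 n.+2)
                 (triples p n n.+1 n.+2 + triples p n.+2 n.+1 n).
Proof.
rewrite /weight (eq_big_nat _ _ wloc_levels) exchange_big_nat /=.
apply: eq_bigr => n _; rewrite /level_weight /triples.
by rewrite !big_split /= !prodrXr big_split.
Qed.
End WeightByLevels.

Theorem lemma1 (F : rcfType) (M : nat) (R : nat -> F) (p : seq nat) :
  (1 <= M)%N ->
  (forall n, (n <= M)%N -> -1 < R n < 1) ->
  scattering_seq M p ->
  weight R p =
  \prod_(0 <= n < M.+1)
    ((- R n) ^ ((kappa_tilde M n p)%:Z - (beta n p)%:Z)
     * R n ^ ((kappa n p)%:Z - (beta n p)%:Z)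
     * Tcoef R n ^ (2 * (beta n p)%:Z)).
Proof.
move=> _ _ hp; rewrite (weight_levels R hp); apply: eq_big_nat => n /andP[_ nM].
have exits := crossings_closed hp n.+1.
rewrite (crossings_departures hp) (crossings_arrivals hp) in exits.
rewrite (kappa_tilde_crossings hp nM) (kappa_crossings hp) (beta_triples hp).
rewrite (crossings_departures hp) (crossings_arrivals hp).
set A := triples p n n.+1 n; set B := triples p n.+2 n.+1 n.+2.
set S := triples p n n.+1 n.+2; set E := triples p n.+2 n.+1 n.
have -> : E = S by lia.
have -> : (S + B)%:Z - S%:Z = B by lia.
have -> : (A + S)%:Z - S%:Z = A by lia.
have -> : 2 * S%:Z = (S + S)%N by lia.
by rewrite -!exprnP /level_weight [R n ^+ A * _]mulrC.
Qed.
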